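(* Let $\Sigma$ be a ranked alphabet, $B$ a strong bimonoid and $r:T_\Sigma\to B$. The following are equivalent: (i) there is a crisp-deterministic $(\Sigma,B)$-wta $\mathcal{A}$ with $r=[\![\mathcal{A}]\!]^{\mathrm{init}}$; (ii) there is a finite $(\Sigma,B)$-algebra $\mathcal{K}$ with $r=[\![\mathcal{K}]\!]$; (iii) $r$ is a $(\Sigma,B)$-recognizable step mapping in normal form; (iv) $r$ is a $(\Sigma,B)$-recognizable step mapping; (v) $\mathrm{im}(r)$ is finite and for each $b\in B$ the tree language $r^{-1}(b)=\{\xi\in T_\Sigma\mid r(\xi)=b\}$ is recognizable.
   Context: Ranked alphabet $\Sigma$ ($\Sigma^{(0)}\ne\emptyset$), trees $T_\Sigma$; strong bimonoid $(B,\oplus,\otimes,\mathbb{0},\mathbb{1})$ ($(B,\oplus,\mathbb{0})$ commutative monoid, $(B,\otimes,\mathbb{1})$ monoid, $\mathbb{0}\ne\mathbb{1}$, $\mathbb{0}$ absorbing; no distributivity). A tree language $L\subseteq T_\Sigma$ is recognizable if it is accepted by some finite-state tree automaton. A $(\Sigma,B)$-wta $\mathcal{A}=(Q,\delta,F)$: $Q$ finite nonempty, $\delta_k:Q^k\times\Sigma^{(k)}\times Q\to B$, $F:Q\to B$; $h_{\mathrm{V}(\mathcal{A})}(\sigma(\xi_1,\dots,\xi_k))_q=\bigoplus_{q_1,\dots,q_k}\big(\bigotimes_{i=1}^k h_{\mathrm{V}(\mathcal{A})}(\xi_i)_{q_i}\big)\otimes\delta_k(q_1\dots q_k,\sigma,q)$;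 $[\![\mathcal{A}]\!]^{\mathrm{init}}(\xi)=\bigoplus_q h_{\mathrm{V}(\mathcal{A})}(\xi)_q\otimes F_q$. $\mathcal{A}$ is crisp-deterministic if for all $k,\sigma\in\Sigma^{(k)},q_1,\dots,q_k$ there is a unique $q$ with $\delta_k(q_1\dots q_k,\sigma,q)=\mathbb{1}$ and all other values $\delta_k(q_1\dots q_k,\sigma,q')$ are $\mathbb{0}$. A $(\Sigma,B)$-algebra is $\mathcal{K}=(Q,\theta,F)$, $(Q,\theta)$ a $\Sigma$-algebra, $F:Q\to B$; finite if $Q$ finite; $[\![\mathcal{K}]\!]=F\circ h_{\mathcal{K}}$ with $h_{\mathcal{K}}$ the unique homomorphism from the term algebra $T_\Sigma$. For $L\subseteq T_\Sigma$, $\mathbb{1}_{(B,L)}(\xi)=\mathbb{1}$ if $\xi\in L$ and $\mathbb{0}$ otherwise. $r$ is a $(\Sigma,B)$-recognizable step mapping if $r=\bigoplus_{i=1}^n b_i\otimes\mathbb{1}_{(B,L_i)}$ (pointwise) for some $n\ge1$, recognizable $L_1,\dots,L_n\subseteq T_\Sigma$ and $b_1,\dots,b_n\in B$; it is in normal form if moreover $(L_i)_{i\in[n]}$ is a partition of $T_\Sigma$. *)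

From Stdlib Require List.
From mathcomp Require Import all_boot.
Unset Printing Implicit Defensive.

(* A ranked alphabet is a finite type [Sigma] with a rank function [rk];
   a symbol [s] of rank [rk s] labels nodes with [rk s] children. *)
Inductive tree (Sigma : Type) (rk : Sigma -> nat) : Type :=
  Node (s : Sigma) of ('I_(rk s) -> tree Sigma rk).
Arguments Node {Sigma rk} s _.

Record strong_bimonoid := StrongBimonoid {
  sb_car :> Type;
  sb_add : sb_car -> sb_car -> sb_car;
  sb_mul : sb_car -> sb_car -> sb_car;
  sb_zero : sb_car;
  sb_one : sb_car;
  sb_addA : forall x y z, sb_add x (sb_add y z) = sb_add (sb_add x y) z;
  sb_addC : forall x y, sb_add x y = sb_add y x;
  sb_add0x : forall x, sb_add sb_zero x = x;
  sb_mulA : forall x y z, sb_mul x (sb_mul y z) = sb_mul (sb_mul x y) z;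
  sb_mul1x : forall x, sb_mul sb_one x = x;
  sb_mulx1 : forall x, sb_mul x sb_one = x;
  sb_mul0x : forall x, sb_mul sb_zero x = sb_zero;
  sb_mulx0 : forall x, sb_mul x sb_zero = sb_zero;
  sb_zero_neq_one : sb_zero <> sb_one
}.

Section Defs.
Variables (Sigma : finType) (rk : Sigma -> nat) (B : strong_bimonoid).

Local Notation T := (tree Sigma rk).
Local Notation "x (+) y" := (@sb_add B x y) (at level 50, left associativity).
Local Notation "x (x) y" := (@sb_mul B x y) (at level 40, left associativity).

Record fta := FTA {
  fta_Q : finType;
  fta_delta : forall s : Sigma, {ffun 'I_(rk s) -> fta_Q} -> fta_Q -> bool;
  fta_F : fta_Q -> bool
}.

Fixpoint fta_reach (A : fta) (t : T) (q : fta_Q A) : Prop :=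
  match t with
  | Node s f => exists w : {ffun 'I_(rk s) -> fta_Q A},
      (forall i, fta_reach A (f i) (w i)) /\ fta_delta A s w q
  end.

Definition fta_accepts (A : fta) (t : T) : Prop :=
  exists q, fta_reach A t q /\ fta_F A q.

Definition recognizable (L : T -> Prop) : Prop :=
  exists A : fta, forall t, L t <-> fta_accepts A t.

Record wta := WTA {
  wta_Q : finType;
  wta_Q_nonempty : inhabited wta_Q;
  wta_delta : forall s : Sigma, {ffun 'I_(rk s) -> wta_Q} -> wta_Q -> B;
  wta_F : wta_Q -> B
}.

Fixpoint wta_hV (A : wta) (t : T) (q : wta_Q A) : B :=
  match t with
  | Node s f =>
      \big[@sb_add B / sb_zero B]_(w : {ffun 'I_(rk s) -> wta_Q A})
        ((\big[@sb_mul B / sb_one B]_(i < rk s) wta_hV A (f i) (w i))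
           (x) wta_delta A s w q)
  end.

Definition wta_sem_init (A : wta) (t : T) : B :=
  \big[@sb_add B / sb_zero B]_(q : wta_Q A) (wta_hV A t q (x) wta_F A q).

Definition crisp_deterministic (A : wta) : Prop :=
  forall (s : Sigma) (w : {ffun 'I_(rk s) -> wta_Q A}),
    exists q, wta_delta A s w q = sb_one B /\
              forall q', q' <> q -> wta_delta A s w q' = sb_zero B.

Record sbalg := SBAlg {
  alg_Q : Type;
  alg_theta : forall s : Sigma, ('I_(rk s) -> alg_Q) -> alg_Q;
  alg_F : alg_Q -> B
}.

Fixpoint alg_h (K : sbalg) (t : T) : alg_Q K :=
  match t with Node s f => alg_theta K s (fun i => alg_h K (f i)) end.

Definition alg_sem (K : sbalg) (t : T) : B := alg_F K (alg_h K t).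

Definition finite_alg (K : sbalg) : Prop :=
  exists (e : seq (alg_Q K)), forall x, Stdlib.Lists.List.In x e.

Definition indicator (L : T -> bool) (t : T) : B :=
  if L t then sb_one B else sb_zero B.

Definition step_repr (r : T -> B) (n : nat)
    (b : 'I_n -> B) (L : 'I_n -> T -> bool) : Prop :=
  forall t, r t = \big[@sb_add B / sb_zero B]_(i < n) (b i (x) indicator (L i) t).

Definition rec_step_mapping (r : T -> B) : Prop :=
  exists (n : nat) (b : 'I_n -> B) (L : 'I_n -> T -> bool),
    1 <= n /\ (forall i, recognizable (fun t => L i t)) /\ step_repr r n b L.

Definition is_partition (n : nat) (L : 'I_n -> T -> bool) : Prop :=
  (forall i j t, i <> j -> L i t -> L j t -> False) /\
  (forall t, exists i, L i t).

Definition rec_step_mapping_nf (r : T -> B) : Prop :=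
  exists (n : nat) (b : 'I_n -> B) (L : 'I_n -> T -> bool),
    1 <= n /\ (forall i, recognizable (fun t => L i t)) /\
    is_partition n L /\ step_repr r n b L.

Definition finite_image (r : T -> B) : Prop :=
  exists e : seq B, forall t, Stdlib.Lists.List.In (r t) e.

End Defs.

(** Each condition says that [r] factors through a finite deterministic
    bottom-up computation on trees.  In a crisp-deterministic wta every sum
    defining [h_V] has a single non-zero summand (a product with a zero factor
    vanishes because [0] is absorbing), so without any distributivity the wta
    computes the final weight of the state reached by its unique run: it is a
    finite (Σ,B)-algebra.  A finite algebra has finite image and, read as a
    tree automaton, recognizes every fibre of [r]; the fibres over the
    distinct values form a step mapping in normal form.  Conversely, running
    the subset construction for automata of all the [L_i] of a recognizable
    step mapping [⊕ b_i ⊗ 1_{L_i}] in parallel gives a finite algebra whose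
    state at [t] determines which [L_i] contain [t], hence [r t]. *)

From HB Require Import structures.
From mathcomp Require Import all_boot boolp.

Section BimonoidStructure.
Variable B : strong_bimonoid.

HB.instance Definition _ := Monoid.isComLaw.Build (sb_car B) (sb_zero B)
  (@sb_add B) (@sb_addA B) (@sb_addC B) (@sb_add0x B).
HB.instance Definition _ := Monoid.isLaw.Build (sb_car B) (sb_one B)
  (@sb_mul B) (@sb_mulA B) (@sb_mul1x B) (@sb_mulx1 B).
HB.instance Definition _ := gen_eqMixin (sb_car B).

Lemma big_mul_zero {I : eqType} {r : seq I} {F : I -> B} {i : I} :
  i \in r -> F i = sb_zero B ->
  \big[@sb_mul B/sb_one B]_(j <- r) F j = sb_zero B.
Proof.
by case/splitPr=> r1 r2 Fi0; rewrite big_cat big_cons /= Fi0 sb_mul0x sb_mulx0.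
Qed.

End BimonoidStructure.

Lemma In_memP {X : eqType} {x : X} {s : seq X} : reflect (List.In x s) (x \in s).
Proof.
elim: s => [|y s IH] /=; first by constructor.
by rewrite in_cons; apply: (iffP orP) => [[/eqP ->|/IH]|[->|/IH]]; [left|right|left|right].
Qed.

Lemma In_nth {X : Type} {x : X} {s : seq X} :
  List.In x s -> exists2 i, i < size s & nth x s i = x.
Proof. by elim: s => //= y s IH [->|/IH [i lt_is s_i]]; [exists 0 | exists i.+1]. Qed.

Section TreeAutomata.
Variables (Sigma : finType) (rk : Sigma -> nat) (B : strong_bimonoid).

Local Notation T := (tree Sigma rk).
Local Notation "x (+) y" := (@sb_add B x y) (at level 50, left associativity).
Local Notation "x (x) y" := (@sb_mul B x y) (at level 40, left associativity).
Local Notation zero := (sb_zero B).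
Local Notation one := (sb_one B).

Arguments FTA {Sigma rk}.
Arguments fta_Q {Sigma rk}.
Arguments fta_delta {Sigma rk}.
Arguments fta_F {Sigma rk}.
Arguments fta_reach {Sigma rk}.
Arguments fta_accepts {Sigma rk}.
Arguments recognizable {Sigma rk}.
Arguments WTA {Sigma rk B}.
Arguments wta_Q {Sigma rk B}.
Arguments wta_delta {Sigma rk B}.
Arguments wta_F {Sigma rk B}.
Arguments wta_hV {Sigma rk B}.
Arguments wta_sem_init {Sigma rk B}.
Arguments crisp_deterministic {Sigma rk B}.
Arguments SBAlg {Sigma rk B}.
Arguments alg_Q {Sigma rk B}.
Arguments alg_theta {Sigma rk B}.
Arguments alg_F {Sigma rk B}.
Arguments alg_h {Sigma rk B}.
Arguments alg_sem {Sigma rk B}.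
Arguments finite_alg {Sigma rk B}.
Arguments indicator {Sigma rk B}.
Arguments rec_step_mapping {Sigma rk B}.
Arguments rec_step_mapping_nf {Sigma rk B}.
Arguments is_partition {Sigma rk}.
Arguments finite_image {Sigma rk B}.

Fixpoint tree_ind_nested (P : T -> Prop)
    (IH : forall s f, (forall i, P (f i)) -> P (Node s f)) (t : T) : P t :=
  match t with Node s f => IH s f (fun i => tree_ind_nested P IH (f i)) end.

Lemma recognizable_ext (L L' : T -> Prop) :
  (forall t, L t <-> L' t) -> recognizable L -> recognizable L'.
Proof. by move=> LL' [A accA]; exists A => t; rewrite -LL'. Qed.

Lemma alg_h_hom (K K' : sbalg Sigma rk B) (phi : alg_Q K' -> alg_Q K) :
  (forall s g, phi (alg_theta K' s g) = alg_theta K s (phi \o g)) ->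
  forall t, phi (alg_h K' t) = alg_h K t.
Proof.
move=> phi_hom; elim/tree_ind_nested => s f IH /=.
by rewrite phi_hom; congr (alg_theta K s _); apply: funext => i /=.
Qed.

Definition fin_alg_computable (r : T -> B) : Prop :=
  exists (Q : finType) (theta : forall s, ('I_(rk s) -> Q) -> Q) (F : Q -> B),
    r = alg_sem (SBAlg Q theta F).

Section DeterministicWta.
Variables (A : wta Sigma rk B) (theta : forall s, ('I_(rk s) -> wta_Q A) -> wta_Q A).
Hypothesis delta_theta :
  forall s w q, wta_delta A s w q = if q == theta s w then one else zero.

Local Notation K := (SBAlg (wta_Q A) theta (wta_F A)).

Lemma wta_hV_det t q : wta_hV A t q = if q == alg_h K t then one else zero.
Proof.
elim/tree_ind_nested: t q => s f IH q /=.
pose w0 := [ffun i => alg_h K (f i)].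
rewrite (bigD1 w0) //= [X in _ (+) X]big1 => [|w w_neq_w0].
  rewrite Monoid.mulm1 big1 => [|i _]; last by rewrite IH ffunE eqxx.
  rewrite sb_mul1x delta_theta; congr (if q == _ then _ else _).
  by congr (theta s _); apply: funext => i; rewrite ffunE.
have [i w_i] : exists i, w i != alg_h K (f i).
  apply/existsP; apply: contraR w_neq_w0 => /existsPn w_eq.
  by apply/eqP/ffunP => i; rewrite ffunE; apply/eqP/negPn/w_eq.
by rewrite (big_mul_zero _ (mem_index_enum i)) ?sb_mul0x // IH (negbTE w_i).
Qed.

Lemma wta_sem_det : wta_sem_init A = alg_sem K.
Proof.
apply: funext => t; rewrite /wta_sem_init (bigD1 (alg_h K t)) //=.
rewrite wta_hV_det eqxx sb_mul1x big1 ?Monoid.mulm1 // => q /negbTE q_neq.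
by rewrite wta_hV_det q_neq sb_mul0x.
Qed.

End DeterministicWta.

Lemma crisp_deterministicP (A : wta Sigma rk B) : crisp_deterministic A ->
  exists theta : forall s, ('I_(rk s) -> wta_Q A) -> wta_Q A,
    forall s w q, wta_delta A s w q = if q == theta s w then one else zero.
Proof.
move=> crispA; exists (fun s g => sval (cid (crispA s (finfun g)))) => s w q.
rewrite ffunK; case: cid => q' /= [delta_q' delta_other].
by case: eqP => [->|/delta_other].
Qed.

Lemma crisp_wta_fin_alg (r : T -> B) :
  (exists A, crisp_deterministic A /\ r = wta_sem_init A) -> fin_alg_computable r.
Proof.
case=> A [/crisp_deterministicP [theta delta_theta] ->].
by exists (wta_Q A), theta, (wta_F A); apply: wta_sem_det.
Qed.

Section FiniteAlgebra.
Variables (Q : finType) (theta : forall s, ('I_(rk s) -> Q) -> Q) (F : Q -> B).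

Local Notation K := (SBAlg Q theta F).

Definition alg_wta (q0 : Q) : wta Sigma rk B :=
  WTA Q (inhabits q0) (fun s w q => if q == theta s w then one else zero) F.

Lemma alg_wta_crisp q0 : crisp_deterministic (alg_wta q0).
Proof.
by move=> s w; exists (theta s w); split=> [|q /eqP /negbTE q_neq] /=; rewrite ?eqxx ?q_neq.
Qed.

Lemma alg_wta_sem q0 : wta_sem_init (alg_wta q0) = alg_sem K.
Proof. exact: wta_sem_det. Qed.

Lemma finite_alg_fintype : finite_alg K.
Proof. by exists (enum Q) => q; apply/In_memP; rewrite mem_enum. Qed.

Lemma finite_image_fin_alg : finite_image (alg_sem K).
Proof.
by exists [seq F q | q <- enum Q] => t; apply/In_memP/map_f; rewrite mem_enum.
Qed.

Lemma recognizable_alg_preim (P : pred Q) : recognizable (fun t => P (alg_h K t)).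
Proof.
pose A := FTA Q (fun s w q => q == theta s w) P.
have reachA t q : fta_reach A t q <-> q = alg_h K t.
  elim/tree_ind_nested: t q => s f IH q /=; split.
    case=> w [w_reach /eqP ->]; congr (theta s _).
    by apply: funext => i; apply/IH.
  move=> ->; exists [ffun i => alg_h K (f i)]; split=> [i|].
    by rewrite ffunE; apply/IH.
  by apply/eqP; congr (theta s _); apply: funext => i; rewrite ffunE.
exists A => t; split=> [Pt|[q [/reachA -> //]]].
by exists (alg_h K t); split=> //; apply/reachA.
Qed.

End FiniteAlgebra.

Lemma fin_alg_crisp_wta (t0 : T) (r : T -> B) : fin_alg_computable r ->
  exists A, crisp_deterministic A /\ r = wta_sem_init A.
Proof.
case=> Q [theta [F ->]]; pose q0 := alg_h (SBAlg Q theta F) t0.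
exists (alg_wta _ theta F q0).
by rewrite alg_wta_sem; split=> //; apply: alg_wta_crisp.
Qed.

Lemma fin_alg_finite_alg (r : T -> B) : fin_alg_computable r ->
  exists K, finite_alg K /\ r = alg_sem K.
Proof.
by case=> Q [theta [F ->]]; exists (SBAlg Q theta F); split; first exact: finite_alg_fintype.
Qed.

(* The carrier of a finite algebra is only a listed [Type]; re-index it by
   positions in the list to obtain a [finType]. *)
Lemma finite_alg_fin_alg (r : T -> B) :
  (exists K, finite_alg K /\ r = alg_sem K) -> fin_alg_computable r.
Proof.
case=> K [[e e_full] ->]; pose v (i : 'I_(size e)) := tnth (in_tuple e) i.
have v_onto x : exists i, v i = x.
  have [i lt_ie <-] := In_nth (e_full x).
  by exists (Ordinal lt_ie); rewrite /v (tnth_nth x).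
pose index x := sval (cid (v_onto x)).
have indexK x : v (index x) = x by rewrite /index; case: cid.
pose K' := SBAlg 'I_(size e) (fun s g => index (alg_theta K s (v \o g))) (alg_F K \o v).
have v_hom : forall t, v (alg_h K' t) = alg_h K t.
  by apply: alg_h_hom => s g; apply: indexK.
exists 'I_(size e), (alg_theta K'), (alg_F K').
by apply: funext => t; rewrite /alg_sem -v_hom.
Qed.

Lemma fin_alg_preim (r : T -> B) : fin_alg_computable r ->
  finite_image r /\ forall b, recognizable (fun t => r t = b).
Proof.
case=> Q [theta [F ->]]; split=> [|b]; first exact: finite_image_fin_alg.
apply: recognizable_ext (recognizable_alg_preim _ theta F (fun q => F q == b)).
by move=> t; split=> /eqP.
Qed.

Lemma step_sum_partition {n} {b : 'I_n -> B} {L : 'I_n -> T -> bool} {t i} :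
  is_partition n L -> L i t ->
  \big[@sb_add B/zero]_(j < n) (b j (x) indicator (L j) t) = b i.
Proof.
case=> L_disj _ Lit; rewrite (bigD1 i) //= /indicator Lit sb_mulx1.
rewrite big1 ?Monoid.mulm1 // => j /eqP j_neq_i.
by case: ifP => [Ljt|_]; [case: (L_disj j i t j_neq_i) | apply: sb_mulx0].
Qed.

Lemma preim_rec_step_nf (t0 : T) (r : T -> B) :
  finite_image r -> (forall b, recognizable (fun t => r t = b)) ->
  rec_step_mapping_nf r.
Proof.
case=> e r_in_e r_rec; pose s := in_tuple (undup e).
have r_in_s t : r t \in s.
  by have [i lt_ie <-] := In_nth (r_in_e t); rewrite mem_undup mem_nth.
have s_inj : injective (tnth s) by apply/tuple_uniqP/undup_uniq.
pose L i t := r t == tnth s i.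
have L_part : is_partition _ L.
  split=> [i j t i_neq_j /eqP ri /eqP rj|t].
    by apply/i_neq_j/s_inj; rewrite -ri -rj.
  by have /tnthP [i ri] := r_in_s t; exists i; apply/eqP.
exists (size (undup e)), (tnth s), L; split.
  by have /tnthP [i _] := r_in_s t0; apply: leq_ltn_trans (leq0n i) (ltn_ord i).
split=> [i|]; first by apply: recognizable_ext (r_rec (tnth s i)) => t; split=> /eqP.
split=> // t; have /tnthP [i ri] := r_in_s t.
have Lit : L i t by apply/eqP.
by rewrite (step_sum_partition L_part Lit).
Qed.

Lemma rec_step_nfW (r : T -> B) : rec_step_mapping_nf r -> rec_step_mapping r.
Proof. by case=> n [b [L [? [? [_ ?]]]]]; exists n, b, L. Qed.

Section SubsetConstruction.
Variables (n : nat) (A : 'I_n -> fta Sigma rk).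

Definition union_state := {i : 'I_n & fta_Q (A i)}.
Local Notation inU q := (Tagged (fun i => fta_Q (A i)) q : union_state).

Definition subset_theta s (g : 'I_(rk s) -> {set union_state}) : {set union_state} :=
  [set x : union_state | [exists w : {ffun 'I_(rk s) -> fta_Q (A (tag x))},
             [forall j, inU (w j) \in g j] && fta_delta (A (tag x)) s w (tagged x)]].

Definition has_final (S : {set union_state}) (i : 'I_n) : bool :=
  [exists q : fta_Q (A i), (inU q \in S) && fta_F (A i) q].

Variable F : {set union_state} -> B.
Local Notation K := (SBAlg {set union_state} subset_theta F).

Lemma mem_subset_run t x : x \in alg_h K t <-> fta_reach (A (tag x)) t (tagged x).
Proof.
elim/tree_ind_nested: t x => s f IH x /=; rewrite inE; split.
  case/existsP=> w /andP [/forallP w_run delta_w]; exists w; split=> // j.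
  exact/(IH j (inU (w j)))/w_run.
case=> w [w_reach delta_w]; apply/existsP; exists w; rewrite delta_w andbT.
by apply/forallP => j; apply/(IH j (inU (w j)))/w_reach.
Qed.

Lemma has_final_run t i : has_final (alg_h K t) i <-> fta_accepts (A i) t.
Proof.
split=> [/existsP [q /andP [/mem_subset_run q_reach final_q]]|[q [q_reach final_q]]].
  by exists q.
by apply/existsP; exists q; rewrite final_q andbT; apply/mem_subset_run.
Qed.

End SubsetConstruction.

Arguments union_state {n}.
Arguments subset_theta {n}.
Arguments has_final {n}.
Arguments has_final_run {n A F t i}.

Lemma rec_step_fin_alg (r : T -> B) : rec_step_mapping r -> fin_alg_computable r.
Proof.
case=> n [b [L [_ [L_rec r_step]]]].
pose A i := sval (cid (L_rec i)).
have L_acc i t : L i t <-> fta_accepts (A i) t by rewrite /A; case: cid.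
pose F S := \big[@sb_add B/zero]_(i < n)
              (b i (x) (if has_final A S i then one else zero)).
exists {set union_state A}, (subset_theta A), F.
apply: funext => t; rewrite r_step /alg_sem /=; apply: eq_bigr => i _.
rewrite /indicator; congr (_ (x) (if _ then _ else _)).
by apply/idP/idP => [/L_acc/has_final_run|/has_final_run/L_acc].
Qed.

End TreeAutomata.

Theorem lemma5p3 (Sigma : finType) (rk : Sigma -> nat)
    (hSigma0 : exists s : Sigma, rk s = 0)
    (B : strong_bimonoid) (r : tree Sigma rk -> B) :
  let P1 := exists A : wta Sigma rk B, crisp_deterministic Sigma rk B A /\ r = wta_sem_init Sigma rk B A in
  let P2 := exists K : sbalg Sigma rk B, finite_alg Sigma rk B K /\ r = alg_sem Sigma rk B K in
  let P3 := rec_step_mapping_nf Sigma rk B r in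
  let P4 := rec_step_mapping Sigma rk B r in
  let P5 := finite_image Sigma rk B r /\
            forall b : B, recognizable Sigma rk (fun t => r t = b) in
  (P1 <-> P2) /\ (P1 <-> P3) /\ (P1 <-> P4) /\ (P1 <-> P5).
Proof.
move=> P1 P2 P3 P4 P5; have [s0 rk_s0] := hSigma0.
have t0 : tree Sigma rk by apply: (Node s0); rewrite rk_s0 => -[].
pose Fin := fin_alg_computable Sigma rk B r.
have P1_Fin : P1 -> Fin := @crisp_wta_fin_alg Sigma rk B r.
have Fin_P1 : Fin -> P1 := @fin_alg_crisp_wta Sigma rk B t0 r.
have P2_Fin : P2 -> Fin := @finite_alg_fin_alg Sigma rk B r.
have Fin_P2 : Fin -> P2 := @fin_alg_finite_alg Sigma rk B r.
have Fin_P5 : Fin -> P5 := @fin_alg_preim Sigma rk B r.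
have P5_P3 : P5 -> P3 by case; apply: (@preim_rec_step_nf Sigma rk B t0 r).
have P3_P4 : P3 -> P4 := @rec_step_nfW Sigma rk B r.
have P4_Fin : P4 -> Fin := @rec_step_fin_alg Sigma rk B r.
tauto.
Qed.
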